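(* For every $p\in\{1,\dots,K\}$ the total number of waiting clients in the top $p$ priority levels is geometrically distributed under $P$: for all integers $k\ge0$, $$\sum_{\substack{\mathbf n\in\mathbb N_0^K\\ n_1+\dots+n_p=k}}P(\mathbf n)=(1-\sigma_p)\,\sigma_p^{\,k}.$$ In particular the level-1 marginal is $(1-r_1)r_1^k$ and the total queue length is $(1-r)r^k$.
   Context: Fix integers $c\ge 1$, $K\ge 2$ and reals $r_1,\dots,r_K>0$ with $r=\sum_{k=1}^K r_k<1$ (here $r_k=\lambda_k/(c\mu)$ for an M/M/$c$ queue with $K$ non-preemptive priority levels, level 1 the highest). Write $\sigma_k=\sum_{j=1}^k r_j$, $\mathbf e_\kappa$ for the standard unit vectors of $\mathbb Z^K$, $\delta_{ij}$ for the Kronecker delta. Consider the equations for $(p_{\mathbf n})_{\mathbf n\in\mathbb N_0^K}$, with the convention $p_{\mathbf n}=0$ if some component of $\mathbf n$ is negative: $$(1+r)p_{\mathbf n}=\Big(\prod_{j=1}^K\delta_{0n_j}\Big)p_{\mathbf n}+\sum_{\kappa=1}^K\Big[r_\kappa p_{\mathbf n-\mathbf e_\kappa}+\Big(\prod_{j=1}^{\kappa-1}\delta_{0n_j}\Big)p_{\mathbf n+\mathbf e_\kappa}\Big],\quad \mathbf n\in\mathbb N_0^K .$$ These are the stationary balance equations for the states in which all $c$ servers are busy and $n_\kappa$ clients of level $\kappa$ wait in the queue; their nonnegative summable solutions form a one-dimensional cone, and $P$ denotes the unique solution with $\sum_{\mathbf n}P(\mathbf n)=1$. *)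

From HB Require Import structures.
From mathcomp Require Import all_boot all_order all_algebra.
From mathcomp Require Import all_classical all_reals.
From mathcomp Require Import ereal esum.
Set Implicit Arguments. Unset Strict Implicit. Unset Printing Implicit Defensive.
Import Order.TTheory GRing.Theory Num.Theory.
Local Open Scope ring_scope.

(* States n = (n_1,...,n_K) in N_0^K; level kappa (1-based in the paper) is
   the ordinal i : 'I_K with kappa = i + 1. *)
Definition state (K : nat) := {ffun 'I_K -> nat}.

Definition incr K (n : state K) (i : 'I_K) : state K :=
  [ffun j => if j == i then (n j).+1 else n j].
(* n - e_i (only used when n i > 0) *)
Definition decr K (n : state K) (i : 'I_K) : state K :=
  [ffun j => if j == i then (n j).-1 else n j].

(* p_{n - e_i}, with the convention p = 0 when a component is negative *)
Definition pminus (R : ringType) K (P : state K -> R) (n : state K) (i : 'I_K) : R :=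
  if n i == 0%N then 0 else P (decr n i).

Definition balance_eqs (R : ringType) K (r : 'I_K -> R) (P : state K -> R) : Prop :=
  forall n : state K,
    (1 + \sum_(i < K) r i) * P n =
      (if [forall j, n j == 0%N] then P n else 0)
      + \sum_(i < K) (r i * pminus P n i
                      + (if [forall j : 'I_K, (j < i)%N ==> (n j == 0%N)]
                         then P (incr n i) else 0)).

Definition sigma (R : ringType) K (r : 'I_K -> R) (p : nat) : R :=
  \sum_(i < K | (i < p)%N) r i.

Definition topsum K (n : state K) (p : nat) : nat :=
  \sum_(i < K | (i < p)%N) n i.

From HB Require Import structures.
From mathcomp Require Import all_boot all_order all_algebra.
From mathcomp Require Import all_classical all_reals.
From mathcomp Require Import ereal esum.
From mathcomp Require Import topology normedtype sequences.
From mathcomp Require Import lra.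
Import numFieldNormedType.Exports.
Import Order.TTheory GRing.Theory Num.Theory.
Local Open Scope classical_set_scope.
Local Open Scope ring_scope.
Set Implicit Arguments. Unset Strict Implicit. Unset Printing Implicit Defensive.

(* Let G_k be the mass of the states whose top p levels hold k clients in total, and
   sum the balance equations over that set.  An arrival at level i <= p comes from
   the set of k - 1, an arrival at a lower level from the set of k itself.  A
   nonempty state is left by a service completion at its first busy level, which
   lowers the top-p count iff that level is among the top p (otherwise the count is
   already 0).  This gives (1 + sigma_p) G_k = sigma_p G_(k-1) + G_(k+1) for k > 0
   and G_1 = sigma_p G_0, hence G_k = G_0 sigma_p^k, and normalisation forces
   G_0 = 1 - sigma_p. *)

Section States.
Variable K : nat.
Implicit Types (n : state K) (i : 'I_K) (p k : nat).

Definition higher_empty i n : bool := [forall j : 'I_K, (j < i)%N ==> (n j == 0%N)].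

Lemma incrE n i j : incr n i j = (n j + (j == i))%N.
Proof. by rewrite ffunE; case: eqP => _; rewrite ?addn1 ?addn0. Qed.

Lemma decr_incr n i : decr (incr n i) i = n.
Proof. by apply/ffunP => j; rewrite !ffunE; case: eqP => // ->. Qed.

Lemma incr_decr n i : n i != 0%N -> incr (decr n i) i = n.
Proof.
by move=> ni; apply/ffunP => j; rewrite !ffunE; case: eqP => // ->; rewrite prednK // lt0n.
Qed.

Lemma incr_inj i : injective (fun n : state K => incr n i).
Proof. by move=> m n /(congr1 (fun m : state K => decr m i)); rewrite !decr_incr. Qed.

Lemma incr_neq0 n i : incr n i i != 0%N.
Proof. by rewrite ffunE eqxx. Qed.

Lemma topsum_incr n i p : topsum (incr n i) p = (topsum n p + (i < p))%N.
Proof.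
rewrite /topsum; under eq_bigr do rewrite incrE; rewrite big_split /=; congr addn.
rewrite big_mkcond (bigD1 i) //= eqxx big1 ?addn0; first by case: (i < p)%N.
by move=> j /negbTE ->; case: (j < p)%N.
Qed.

Lemma higher_empty_decr n i : higher_empty i (decr n i) = higher_empty i n.
Proof. by apply: eq_forallb => j; rewrite ffunE; case: (eqVneq j i) => [->|//]; rewrite ltnn. Qed.

Lemma first_busy_level n : ~~ [forall j, n j == 0%N] ->
  exists i0, forall i, (n i != 0%N) && higher_empty i n = (i == i0).
Proof.
case/forallPn => j0 /= nj0.
case: (@arg_minnP _ j0 (fun i => n i != 0%N) val nj0) => i0 ni0 i0_min; exists i0 => i.
apply/andP/eqP => [[ni /forallP hi]|->]; last first.
  by split=> //; apply/forallP => j; apply/implyP; apply: contraTT; rewrite -leqNgt; apply: i0_min.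
apply/val_inj/eqP; rewrite eqn_leq (i0_min i ni) andbT leqNgt; apply/negP => lt_i0i.
by move: ni0; rewrite (eqP (implyP (hi i0) lt_i0i)).
Qed.

Lemma topsum_gt0_first_busy n i p : n i != 0%N -> higher_empty i n ->
  (0 < topsum n p)%N = (i < p)%N.
Proof.
move=> ni /forallP hi; case: (ltnP i p) => [ip|pi].
  by rewrite /topsum (bigD1 i) //= ltn_addr // lt0n.
apply/negbTE; rewrite -leqNgt leqn0 /topsum sum_nat_eq0; apply/forallP => j.
by apply/implyP => jp; apply: (implyP (hi j)); apply: leq_trans jp pi.
Qed.

Lemma departures_pointwise (R : nzRingType) n p k (x : R) :
  (if (topsum n p == k) && [forall j, n j == 0%N] then x else 0)
  + \sum_i (if (n i != 0%N) && higher_empty i n && (topsum n p == k + (i < p))%N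
            then x else 0)
  = (if topsum n p == k.+1 then x else 0)
    + (if (k == 0%N) && (topsum n p == 0%N) then x else 0).
Proof.
case: (boolP [forall j, n j == 0%N]) => [/forallP n0 | /first_busy_level [i0 busy]].
  have -> : topsum n p = 0%N.
    by apply/eqP; rewrite /topsum sum_nat_eq0; apply/forallP => j; rewrite n0 implybT.
  rewrite big1 => [|i _]; last by rewrite n0.
  by case: k => [|k]; rewrite /= ?addr0 ?add0r.
rewrite andbF add0r (bigD1 i0) //= busy eqxx /= big1 ?addr0 => [|i /negbTE]; last first.
  by rewrite busy => ->.
have /andP [ni0 hi0] : (n i0 != 0%N) && higher_empty i0 n by rewrite busy.
have := topsum_gt0_first_busy p ni0 hi0; case: (ltnP i0 p) => _ /=.
  by rewrite addn1 lt0n => /negbTE ->; rewrite andbF addr0.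
move/negbT; rewrite -leqNgt leqn0 => /eqP ->; rewrite addn0.
by case: k => [|k]; rewrite /= ?addr0 ?add0r.
Qed.

End States.

Section EsumEFin.
Variables (R : realType) (T : choiceType) (I : set T).
Implicit Types (f g : T -> R).

Lemma esumZl (c : R) (a : T -> \bar R) : 0 <= c -> (forall x, (0 <= a x)%E) ->
  \esum_(x in I) (c%:E * a x)%E = (c%:E * \esum_(x in I) a x)%E.
Proof.
move=> c0 a0; have le_Z (d : R) (b : T -> \bar R) : 0 <= d -> (forall x, (0 <= b x)%E) ->
    (\esum_(x in I) (d%:E * b x) <= d%:E * \esum_(x in I) b x)%E.
  move=> d0 b0; apply: ge_ereal_sup => /= _ [X [finX XI]] <-.
  rewrite -ge0_mule_fsumr //; apply: lee_wpmul2l; first by rewrite lee_fin.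
  by apply: ereal_sup_ubound; exists X.
have [->|c_neq0] := eqVneq c 0.
  by rewrite mul0e; under eq_esum do rewrite mul0e; rewrite esum1.
have cV0 : 0 <= c^-1 by rewrite invr_ge0.
apply/eqP; rewrite eq_le le_Z //=.
have := le_Z c^-1 (fun x => c%:E * a x)%E cV0 (fun x => mule_ge0 (c0 : (0 <= c%:E)%E) (a0 x)).
under eq_esum do rewrite muleA -EFinM mulVf // mul1e.
move=> /(lee_wpmul2l (c0 : (0 <= c%:E)%E)) H; apply: le_trans H _.
by rewrite muleA -EFinM divff // mul1e.
Qed.

Lemma esumZl_EFin (c : R) f : 0 <= c -> (forall x, 0 <= f x) ->
  \esum_(x in I) (c * f x)%:E = (c%:E * \esum_(x in I) (f x)%:E)%E.
Proof.
by move=> c0 f0; under eq_esum do rewrite EFinM; rewrite esumZl // => x; rewrite lee_fin.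
Qed.

Lemma esumD_EFin f g : (forall x, 0 <= f x) -> (forall x, 0 <= g x) ->
  \esum_(x in I) (f x + g x)%:E = (\esum_(x in I) (f x)%:E + \esum_(x in I) (g x)%:E)%E.
Proof.
move=> f0 g0; under eq_esum do rewrite EFinD.
by rewrite esumD // => x _; rewrite lee_fin.
Qed.

Lemma esum_sum_EFin n (F : 'I_n -> T -> R) : (forall i x, 0 <= F i x) ->
  \esum_(x in I) (\sum_(i < n) F i x)%:E = (\sum_(i < n) \esum_(x in I) (F i x)%:E)%E.
Proof.
move=> F0; under eq_esum do rewrite -sumEFin.
by rewrite esum_sum // => x i _ _; rewrite lee_fin.
Qed.

End EsumEFin.

Lemma esum_incr (R : realType) K (i : 'I_K) (b : state K -> \bar R) :
  (forall n, (0 <= b n)%E) ->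
  \esum_(n in [set: state K]) b (incr n i) =
  \esum_(n in [set: state K]) (if n i != 0%N then b n else 0%E).
Proof.
move=> b0; rewrite -(reindex_esum [set: state K] [set m : state K | m i != 0%N]
                                    (fun n : state K => incr n i)).
  by rewrite esum_mkcond; apply: eq_esum => n _; rewrite mem_setE.
split=> [n _|m n _ _|m /= mi]; [exact: incr_neq0|exact: incr_inj|].
by exists (decr m i) => //; rewrite incr_decr.
Qed.

Lemma sum_split_top (R : nzRingType) K (r : 'I_K -> R) (p : nat) (a b : R) :
  \sum_(i < K) r i * (if (i < p)%N then a else b)
  = sigma r p * a + (\sum_(i < K) r i - sigma r p) * b.
Proof.
rewrite (bigID (fun i : 'I_K => (i < p)%N)) /= [in RHS](bigID (fun i : 'I_K => (i < p)%N)) /=.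
rewrite /sigma addrAC subrr add0r !mulr_suml.
by congr (_ + _); apply: eq_bigr => i; [move->|move/negPf->].
Qed.

Lemma ge0_if (R : numDomainType) (b : bool) (x : R) : 0 <= x -> 0 <= if b then x else 0.
Proof. by case: b. Qed.

Section LevelMass.
Variables (R : realType) (K : nat) (r : 'I_K -> R) (P : state K -> R) (p : nat).
Hypotheses (r_ge0 : forall i, 0 <= r i) (P_ge0 : forall n, 0 <= P n).
Hypothesis P_sum1 : \esum_(n in [set: state K]) (P n)%:E = 1%E.

Lemma pminus_ge0 n i : 0 <= pminus P n i.
Proof. by rewrite /pminus; case: ifP. Qed.

Definition level_mass k := fine (\esum_(n in [set n : state K | topsum n p = k]) (P n)%:E).

Lemma esum_level k :
  \esum_(n in [set: state K]) (if topsum n p == k then P n else 0)%:E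
  = \esum_(n in [set n : state K | topsum n p = k]) (P n)%:E.
Proof.
rewrite [RHS]esum_mkcond; apply: eq_esum => n _.
by case: eqP => [<-|ne]; [rewrite mem_set|rewrite memNset].
Qed.

Lemma level_massE k :
  \esum_(n in [set n : state K | topsum n p = k]) (P n)%:E = (level_mass k)%:E.
Proof.
have mass_ge0 : (0 <= \esum_(n in [set n : state K | topsum n p = k]) (P n)%:E)%E.
  by apply: esum_ge0 => n _; rewrite lee_fin.
rewrite fineK // ge0_fin_numE // (le_lt_trans _ (ltry 1)) // -P_sum1 -esum_level.
by apply: le_esum => n _; rewrite lee_fin; case: ifP.
Qed.

Lemma esum_arrivals i k :
  \esum_(n in [set: state K]) (if topsum n p == k then pminus P n i else 0)%:E
  = (if (i < p)%N then (if k is k'.+1 then level_mass k' else 0) else level_mass k)%:E.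
Proof.
pose b n := (if topsum n p == k then P (decr n i) else 0)%:E.
transitivity (\esum_(n in [set: state K]) (if n i != 0%N then b n else 0%E)).
  by apply: eq_esum => n _; rewrite /b /pminus; case: (n i == 0%N); rewrite /= ?if_same.
rewrite -esum_incr => [|n]; last by rewrite lee_fin ge0_if.
under eq_esum do rewrite /b decr_incr topsum_incr.
case: (i < p)%N; last by under eq_esum do rewrite addn0; rewrite esum_level level_massE.
case: k {b} => [|k]; first by rewrite esum1 // => n _; rewrite addn1.
by under eq_esum do rewrite addn1 eqSS; rewrite esum_level level_massE.
Qed.

Lemma esum_departures i k :
  \esum_(n in [set: state K])
    (if (topsum n p == k) && higher_empty i n then P (incr n i) else 0)%:E
  = \esum_(n in [set: state K])
    (if (n i != 0%N) && higher_empty i n && (topsum n p == k + (i < p))%N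
     then P n else 0)%:E.
Proof.
pose b m := (if (topsum (decr m i) p == k) && higher_empty i (decr m i) then P m else 0)%:E.
transitivity (\esum_(n in [set: state K]) b (incr n i)).
  by apply: eq_esum => n _; rewrite /b decr_incr.
rewrite esum_incr => [|n]; last by rewrite lee_fin ge0_if.
apply: eq_esum => n _; rewrite /b; case: (boolP (n i != 0%N)) => //= ni.
by rewrite higher_empty_decr -(eqn_add2r (i < p)) -topsum_incr incr_decr // andbC.
Qed.

Lemma esum_all_departures k :
  \esum_(n in [set: state K])
    ((if (topsum n p == k) && [forall j, n j == 0%N] then P n else 0)
     + \sum_(i < K) (if (topsum n p == k) && higher_empty i n then P (incr n i) else 0))%:E
  = (level_mass k.+1 + (if k == 0%N then level_mass 0 else 0))%:E.
Proof.
rewrite esumD_EFin => [|n|n]; last 2 first.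
- exact: ge0_if.
- by apply: sumr_ge0 => i _; apply: ge0_if.
rewrite esum_sum_EFin => [|i n]; last exact: ge0_if.
under eq_bigr do rewrite esum_departures.
rewrite -esum_sum_EFin => [|i n]; last exact: ge0_if.
rewrite -esumD_EFin => [|n|n]; last 2 first.
- exact: ge0_if.
- by apply: sumr_ge0 => i _; apply: ge0_if.
under eq_esum do rewrite departures_pointwise.
rewrite esumD_EFin => [|n|n]; try exact: ge0_if.
rewrite esum_level level_massE EFinD; congr (_ + _)%E.
case: k => [|k] /=; first by rewrite esum_level level_massE.
by rewrite esum1.
Qed.

Hypothesis balP : balance_eqs r P.

Lemma level_balance k :
  (1 + \sum_(i < K) r i) * level_mass k
  = sigma r p * (if k is k'.+1 then level_mass k' else 0)
    + (\sum_(i < K) r i - sigma r p) * level_mass k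
    + (level_mass k.+1 + (if k == 0%N then level_mass 0 else 0)).
Proof.
have balance_on_level n : (1 + \sum_(i < K) r i) * (if topsum n p == k then P n else 0)
  = ((if (topsum n p == k) && [forall j, n j == 0%N] then P n else 0)
     + \sum_(i < K) (if (topsum n p == k) && higher_empty i n then P (incr n i) else 0))
    + \sum_(i < K) r i * (if topsum n p == k then pminus P n i else 0).
  case: (topsum n p == k) => /=; last by rewrite mulr0 !big1 ?addr0 // => i _; rewrite mulr0.
  by rewrite balP big_split /= addrAC addrA.
apply: EFin_inj; rewrite EFinM -level_massE -esum_level -esumZl; first last.
- by move=> n; rewrite lee_fin ge0_if.
- by rewrite addr_ge0 // sumr_ge0.
under eq_esum do rewrite -EFinM balance_on_level.
rewrite esumD_EFin => [|n|n]; last 2 first.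
- by rewrite addr_ge0 ?ge0_if // sumr_ge0 // => i _; rewrite ge0_if.
- by rewrite sumr_ge0 // => i _; rewrite mulr_ge0 ?ge0_if ?pminus_ge0.
have arrivals i :
    \esum_(n in [set: state K]) (r i * (if topsum n p == k then pminus P n i else 0))%:E
    = (r i * (if (i < p)%N then (if k is k'.+1 then level_mass k' else 0) else level_mass k))%:E.
  by rewrite esumZl_EFin // => [|n]; rewrite ?esum_arrivals -?EFinM // ge0_if ?pminus_ge0.
rewrite esum_all_departures esum_sum_EFin => [|i n]; last first.
  by rewrite mulr_ge0 ?ge0_if ?pminus_ge0.
under eq_bigr do rewrite arrivals.
by rewrite sumEFin sum_split_top -EFinD addrC addrA.
Qed.

Lemma level_mass_succ k : level_mass k.+1 = sigma r p * level_mass k.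
Proof.
elim: k => [|k IH]; first by have := level_balance 0; rewrite /=; lra.
by have := level_balance k.+1; rewrite /= -IH; lra.
Qed.

Lemma level_mass_exp k : level_mass k = level_mass 0 * sigma r p ^+ k.
Proof. by elim: k => [|k IH]; rewrite ?expr0 ?mulr1 // level_mass_succ IH exprS mulrCA. Qed.

Hypothesis r_sum_lt1 : \sum_(i < K) r i < 1.

Lemma level_mass0 : level_mass 0 = 1 - sigma r p.
Proof.
have s_ge0 : 0 <= sigma r p by apply: sumr_ge0.
have s_lt1 : sigma r p < 1.
  apply: le_lt_trans r_sum_lt1; rewrite (bigID (fun i : 'I_K => (i < p)%N)) /= lerDl.
  exact: sumr_ge0.
have mass0_ge0 : 0 <= level_mass 0.
  by rewrite -lee_fin -level_massE esum_ge0 // => n _; rewrite lee_fin.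
have levels : [set: state K] = \bigcup_(k in [set: nat]) [set n : state K | topsum n p = k].
  by apply/seteqP; split => n // _; exists (topsum n p).
move: P_sum1; rewrite levels esum_bigcupT => [|i j _ _ [n [/= <- <-]]|n]; last 2 first.
- by [].
- by rewrite lee_fin.
under eq_esum do rewrite level_massE level_mass_exp -/(geometric _ _ _).
rewrite -nneseries_esumT => [|k]; last by rewrite lee_fin geometric_ge0.
have -> : (\sum_(k <oo) (geometric (level_mass 0) (sigma r p) k)%:E)%E
          = (level_mass 0 / (1 - sigma r p))%:E.
  have s_norm : `|sigma r p| < 1 by rewrite ger0_norm.
  have -> : level_mass 0 / (1 - sigma r p)
            = limn (series (geometric (level_mass 0) (sigma r p))).
    by apply/esym/cvg_lim => //; exact: cvg_geometric_series.
  rewrite -EFin_lim.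
    by apply/congr_lim/funext => n; rewrite /series /= sumEFin.
  exact: is_cvg_geometric_series.
have s_neq1 : 1 - sigma r p != 0 by rewrite subr_eq0 gt_eqF.
by move=> [mass_sum1]; rewrite -[LHS](mulfVK s_neq1) mass_sum1 mul1r.
Qed.

End LevelMass.

Theorem mainTheorem4 (R : realType) (c K : nat) (r : 'I_K -> R)
  (hc : (1 <= c)%N) (hK : (2 <= K)%N)
  (hr : forall i, 0 < r i) (hsum : \sum_(i < K) r i < 1)
  (P : state K -> R)
  (hP0 : forall n, 0 <= P n)
  (hP1 : \esum_(n in [set: state K]) (P n)%:E = 1%E)
  (hbal : balance_eqs r P) :
  forall (p k : nat), (1 <= p <= K)%N ->
    \esum_(n in [set n : state K | topsum n p = k]) (P n)%:E
      = ((1 - sigma r p) * sigma r p ^+ k)%:E.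
Proof.
move=> p k _; have r_ge0 i : 0 <= r i by exact: ltW.
by rewrite level_massE // (level_mass_exp p r_ge0) // (level_mass0 p r_ge0).
Qed.
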